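(* Let $(X,\Sigma)$ be a measurable space, $p$ a transition function on it with associated operator $A$ on $ba(X,\Sigma)$, and let $K=\{\mu_1,\dots,\mu_m\}$ be a finitely additive cycle of measures of $A$. If at least one cyclic measure $\mu_i$ is purely finitely additive, then all cyclic measures $\mu_1,\dots,\mu_m$ and the mean measure $\frac1m\sum_{k=1}^m\mu_k$ are purely finitely additive.
   Context: $X$ is an arbitrary infinite set and $\Sigma$ a $\sigma$-algebra of subsets of $X$ containing all one-point sets. $ba(X,\Sigma)$ denotes the space of bounded finitely additive real-valued measures on $\Sigma$. A nonnegative finitely additive measure $\mu$ is purely finitely additive if every countably additive measure $\lambda$ with $0\le\lambda\le\mu$ is identically zero. A transition function is a map $p(x,E)$ with $0\le p(x,E)\le 1$, $p(x,X)=1$, $p(\cdot,E)$ bounded $\Sigma$-measurable for every $E\in\Sigma$, and $p(x,\cdot)$ countably additive for every $x\in X$. The Markov operator is $A\mu(E)=\int_X p(x,E)\,\mu(dx)$. A cycle of measures of $A$ is a finite numbered set $\{\mu_1,\dots,\mu_m\}$ of pairwise different positive finitely additive measures with $A\mu_i=\mu_{i+1}$ ($1\le i\le m-1$) and $A\mu_m=\mu_1$; its mean measure is $\frac1m\sum_{k=1}^m\mu_k$. *)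

From HB Require Import structures.
From mathcomp Require Import all_boot all_order all_algebra.
From mathcomp Require Import all_classical all_reals all_analysis.
Set Implicit Arguments. Unset Strict Implicit. Unset Printing Implicit Defensive.
Import Order.TTheory GRing.Theory Num.Theory.
Import numFieldNormedType.Exports.
Local Open Scope classical_set_scope.
Local Open Scope ring_scope.

Section Defs.
Context (d : measure_display) (X : measurableType d) (R : realType).

(* A real-valued set function, only its values on measurable sets matter. *)
Definition nonneg_on_sigma (mu : set X -> R) : Prop :=
  forall E, measurable E -> 0 <= mu E.

(* finitely additive (real-valued, hence bounded when nonnegative) *)
Definition fin_additive (mu : set X -> R) : Prop :=
  mu set0 = 0 /\
  forall A B, measurable A -> measurable B -> A `&` B = set0 ->
    mu (A `|` B) = mu A + mu B.

Definition count_additive (mu : set X -> R) : Prop :=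
  forall F : nat -> set X, (forall n, measurable (F n)) -> trivIset setT F ->
    (fun n => \sum_(k < n) mu (F k)) @ \oo --> mu (\bigcup_n F n).

Definition pos_fa_measure (mu : set X -> R) : Prop :=
  nonneg_on_sigma mu /\ fin_additive mu.

Definition purely_fin_additive (mu : set X -> R) : Prop :=
  pos_fa_measure mu /\
  forall lam : set X -> R, count_additive lam ->
    (forall E, measurable E -> 0 <= lam E /\ lam E <= mu E) ->
    forall E, measurable E -> lam E = 0.

Definition transition_function (p : X -> set X -> R) : Prop :=
  (forall x E, measurable E -> 0 <= p x E <= 1) /\
  (forall x, p x setT = 1) /\
  (forall E, measurable E -> measurable_fun setT (fun x => p x E)) /\
  (forall x, count_additive (p x)).

Definition lower_sums (mu : set X -> R) (f : X -> R) : set R :=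
  [set r | exists s : seq (set X * R),
     (forall i, (i < size s)%N -> measurable (nth (set0, 0) s i).1 /\
        forall x, (nth (set0, 0) s i).1 x -> (nth (set0, 0) s i).2 <= f x) /\
     (forall i j, (i < size s)%N -> (j < size s)%N -> i != j ->
        (nth (set0, 0) s i).1 `&` (nth (set0, 0) s j).1 = set0) /\
     (forall x, exists2 i, (i < size s)%N & (nth (set0, 0) s i).1 x) /\
     r = \sum_(q <- s) q.2 * mu q.1].

(* integral of a bounded measurable function w.r.t. a positive finitely
   additive measure (Dunford--Schwartz integral, as supremum of lower sums) *)
Definition fa_integral (mu : set X -> R) (f : X -> R) : R :=
  sup (lower_sums mu f).

Definition markov_op (p : X -> set X -> R) (mu : set X -> R) : set X -> R :=
  fun E => fa_integral mu (fun x => p x E).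

Definition measure_cycle (p : X -> set X -> R) (m : nat) (mu : nat -> set X -> R)
  : Prop :=
  (0 < m)%N /\
  (forall i, (i < m)%N -> pos_fa_measure (mu i)) /\
  (forall i j, (i < j)%N -> (j < m)%N -> exists2 E, measurable E & mu i E <> mu j E) /\
  (forall i, (i < m)%N -> forall E, measurable E ->
      markov_op p (mu i) E = mu ((i.+1) %% m)%N E).

Definition mean_measure (m : nat) (mu : nat -> set X -> R) : set X -> R :=
  fun E => (m%:R)^-1 * \sum_(k < m) mu k E.

End Defs.

(* Let lam be countably additive with 0 <= lam <= mu_j. Applying the Markov
   operator A k times gives 0 <= A^k lam <= A^k mu_j = mu_i, and A^k lam is
   again countably additive with the same total mass as lam: on a countably
   additive lam the finitely additive integral is a Lebesgue integral, so
   monotone convergence applies. Purity of mu_i kills A^k lam, hence lam.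

   For the mean measure, purely finitely additive measures are closed under
   positive multiples and sums. For sums, note that when mu is pure and lam is
   countably additive, the meet (lam /\ mu) E = inf_(F <= E) lam F + mu (E \ F)
   is finitely additive and below lam, hence countably additive, and below mu,
   hence zero; so X splits into a part of small lam-measure and a part of small
   mu-measure. *)

From HB Require Import structures.
From mathcomp Require Import all_boot all_order all_algebra.
From mathcomp Require Import all_classical all_reals all_analysis.
From mathcomp Require Import measurable_realfun ring lra.
Import Order.TTheory GRing.Theory Num.Theory.
Import numFieldNormedType.Exports.
Local Open Scope classical_set_scope.
Local Open Scope ring_scope.
Set Implicit Arguments. Unset Strict Implicit. Unset Printing Implicit Defensive.

Section finitely_additive.
Context (d : measure_display) (X : measurableType d) (R : realType).
Implicit Types (mu nu lam : set X -> R) (A B E : set X) (F : nat -> set X).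

Definition sub_measure lam mu : Prop :=
  forall E, measurable E -> 0 <= lam E /\ lam E <= mu E.

Lemma count_additive_set0 lam : count_additive lam -> lam set0 = 0.
Proof.
move=> lamca; have := lamca _ (fun=> measurable0) (@trivIset_set0 _ _ setT).
rewrite bigcup0 // => sums.
have /cvg_series_cvg_0 to0 : cvgn (series (fun=> lam set0)).
  apply/cvg_ex; exists (lam set0).
  by rewrite /series /=; under eq_fun do rewrite big_mkord.
exact: cvg_unique (cvg_cst _) to0.
Qed.

Lemma count_additive_fin_additive lam : count_additive lam -> fin_additive lam.
Proof.
move=> lamca; split => [|A B mA mB AB]; first exact: count_additive_set0.
have mF n : measurable (bigcup2 A B n) by case: n => [|[|n]] //=.
have tF : trivIset setT (bigcup2 A B) by rewrite -trivIset_bigcup2.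
have := lamca _ mF tF; rewrite bigcup2E => sums.
suff sums2 : \sum_(k < n) lam (bigcup2 A B k) @[n --> \oo] --> lam A + lam B.
  exact: cvg_unique sums sums2.
apply: cvg_near_cst; near=> n.
have n2 : (2 <= n)%N by near: n; exists 2%N.
rewrite -(subnKC n2) big_split_ord /= !big_ord_recl big_ord0 big1 /=.
  by rewrite !addr0.
by move=> i _; exact: count_additive_set0.
Unshelve. all: by end_near.
Qed.

Lemma count_additive_pos_fa_measure lam : nonneg_on_sigma lam ->
  count_additive lam -> pos_fa_measure lam.
Proof. by split => //; exact: count_additive_fin_additive. Qed.

Lemma fin_additive_setD mu A B : fin_additive mu ->
  measurable A -> measurable B -> A `<=` B -> mu B = mu A + mu (B `\` A).
Proof.
move=> [_ muU] mA mB AB; rewrite -muU ?setDUK //; first exact: measurableD.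
by rewrite setDIK.
Qed.

Lemma le_pos_fa_measure mu A B : pos_fa_measure mu ->
  measurable A -> measurable B -> A `<=` B -> mu A <= mu B.
Proof.
move=> [mu0 mufa] mA mB AB; rewrite (fin_additive_setD mufa mA mB AB) lerDl.
exact/mu0/measurableD.
Qed.

Lemma pos_fa_measure_eq0 mu : pos_fa_measure mu -> mu setT <= 0 ->
  forall E, measurable E -> mu E = 0.
Proof.
move=> mupos muT0 E mE; apply/eqP; rewrite eq_le mupos.1 // andbT.
exact: le_trans (le_pos_fa_measure mupos mE measurableT (@subsetT _ E)) muT0.
Qed.

Lemma fin_additive_bigsetU mu F : fin_additive mu ->
  (forall n, measurable (F n)) -> trivIset setT F ->
  forall n, \sum_(k < n) mu (F k) = mu (\big[setU/set0]_(k < n) F k).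
Proof.
move=> [mu0 muU] mF tF; elim=> [|n IH]; first by rewrite !big_ord0 mu0.
rewrite !big_ord_recr /= IH muU //; first exact: bigsetU_measurable.
rewrite -bigcup_mkord; apply/seteqP; split => // x [[k /= kn Fkx] Fnx].
by have := tF k n I I (ex_intro _ x (conj Fkx Fnx)) => kE; rewrite kE ltnn in kn.
Qed.

Lemma fin_additive_tail mu F n : fin_additive mu ->
  (forall n, measurable (F n)) -> trivIset setT F ->
  mu (\bigcup_k F k `\` \big[setU/set0]_(k < n) F k) =
  mu (\bigcup_k F k) - \sum_(k < n) mu (F k).
Proof.
move=> mufa mF tF; rewrite (fin_additive_bigsetU mufa mF tF).
have mUn : measurable (\big[setU/set0]_(k < n) F k).
  by apply: bigsetU_measurable => k _; exact: mF.
rewrite (fin_additive_setD mufa mUn (bigcupT_measurable _ mF)).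
  by rewrite addrC addKr.
by rewrite -bigcup_mkord => x [k _ Fkx]; exists k.
Qed.

Lemma count_additive_dominated nu lam : fin_additive nu ->
  (forall E, measurable E -> 0 <= nu E <= lam E) ->
  count_additive lam -> count_additive nu.
Proof.
move=> nufa nule lamca F mF tF.
pose tail n := \bigcup_k F k `\` \big[setU/set0]_(k < n) F k.
have mtail n : measurable (tail n).
  apply: measurableD; first exact: bigcupT_measurable.
  by apply: bigsetU_measurable => k _; exact: mF.
have lam_tail : lam (tail n) @[n --> \oo] --> 0.
  have lamfa := count_additive_fin_additive lamca.
  have -> : (fun n => lam (tail n)) =
      fun n => lam (\bigcup_k F k) - \sum_(k < n) lam (F k).
    by apply/funext => n; exact: fin_additive_tail.
  rewrite -[X in _ --> X](subrr (lam (\bigcup_k F k))).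
  by apply: cvgB; [exact: cvg_cst|exact: lamca].
have nu_tail : nu (tail n) @[n --> \oo] --> 0.
  apply: (squeeze_cvgr _ (cvg_cst 0) lam_tail); apply: nearW => n.
  exact: nule.
have -> : (fun n => \sum_(k < n) nu (F k)) =
    fun n => nu (\bigcup_k F k) - nu (tail n).
  by apply/funext => n; rewrite fin_additive_tail // opprB addrC subrK.
by rewrite -[X in _ --> X]subr0; apply: cvgB; [exact: cvg_cst|].
Qed.

End finitely_additive.

Section fa_integral.
Context (d : measure_display) (X : measurableType d) (R : realType).
Implicit Types (mu lam : set X -> R) (f : X -> R) (s : seq (set X * R)).
Local Notation cell s i := (nth (set0, 0) s i).

Definition lower_step f s : Prop :=
  (forall i, (i < size s)%N -> measurable (cell s i).1 /\
     forall x, (cell s i).1 x -> (cell s i).2 <= f x) /\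
  (forall i j, (i < size s)%N -> (j < size s)%N -> i != j ->
     (cell s i).1 `&` (cell s j).1 = set0) /\
  (forall x, exists2 i, (i < size s)%N & (cell s i).1 x).

Definition step_sum mu s : R := \sum_(q <- s) q.2 * mu q.1.

Definition pos_step s : seq (set X * R) := [seq (q.1, Num.max q.2 0) | q <- s].

Lemma lower_sumsP mu f r :
  lower_sums mu f r <-> exists2 s, lower_step f s & r = step_sum mu s.
Proof.
split; first by case=> s [? [? [? ->]]]; exists s.
by case=> s [? [? ?]] ->; exists s.
Qed.

Lemma lower_step_cst f c : (forall x, c <= f x) -> lower_step f [:: (setT, c)].
Proof.
move=> cf; split.
  by case=> // _; split=> [|x _]; [exact: measurableT|exact: cf].
by split; [case=> [|[]] [|[]]|exists 0%N].
Qed.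

Lemma lower_step_pos f s : (forall x, 0 <= f x) ->
  lower_step f s -> lower_step f (pos_step s).
Proof.
move=> f0 [scell [sdisj scover]]; rewrite /lower_step size_map.
split; last split.
- move=> i si; rewrite (nth_map (set0, 0)) //=.
  have [mi le_f] := scell i si; split => // x ix.
  by rewrite ge_max le_f ?f0.
- by move=> i j si sj ij; rewrite !(nth_map (set0, 0)) //=; exact: sdisj.
- move=> x; have [i si ix] := scover x.
  by exists i; rewrite ?(nth_map (set0, 0)).
Qed.

Lemma step_sum_le_pos mu f s : nonneg_on_sigma mu -> lower_step f s ->
  step_sum mu s <= step_sum mu (pos_step s).
Proof.
move=> mu0 [scell _]; rewrite /step_sum big_map.
rewrite (big_nth (set0, 0)) [in leRHS](big_nth (set0, 0)) !big_mkord.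
apply: ler_sum => i _; apply: ler_wpM2r; last by rewrite le_max lexx.
exact/mu0/(scell _ (ltn_ord i)).1.
Qed.

Lemma lower_step_measure_setT mu f s : fin_additive mu -> lower_step f s ->
  \sum_(q <- s) mu q.1 = mu setT.
Proof.
move=> mufa [scell [sdisj scover]].
pose F i := (cell s i).1.
have mF i : measurable (F i).
  have [si|si] := ltnP i (size s); first exact: (scell i si).1.
  by rewrite /F nth_default //; exact: measurable0.
have tF : trivIset setT F.
  move=> i j _ _ [x [Fix Fjx]]; apply/eqP/negPn/negP => ij.
  have [si|si] := ltnP i (size s); last by move: Fix; rewrite /F nth_default.
  have [sj|sj] := ltnP j (size s); last by move: Fjx; rewrite /F nth_default.
  by have := sdisj i j si sj ij; rewrite -subset0 => /(_ x (conj Fix Fjx)).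
rewrite (big_nth (set0, 0)) big_mkord (fin_additive_bigsetU mufa mF tF).
congr mu; apply/seteqP; split => // x _; rewrite -bigcup_mkord.
by have [i si ix] := scover x; exists i.
Qed.

Lemma step_sum_le_setT mu f s : pos_fa_measure mu -> (forall x, f x <= 1) ->
  lower_step f s -> step_sum mu s <= mu setT.
Proof.
move=> [mu0 mufa] f1 sf; rewrite -(lower_step_measure_setT mufa sf).
have [scell _] := sf; rewrite /step_sum (big_nth (set0, 0)).
rewrite [in leRHS](big_nth (set0, 0)) !big_mkord; apply: ler_sum => i _.
have [mi le_f] := scell i (ltn_ord i).
have [->|/set0P[x ix]] := eqVneq (cell s i).1 set0; first by rewrite mufa.1 mulr0.
by rewrite -[leRHS]mul1r ler_wpM2r ?mu0 // (le_trans (le_f x ix)).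
Qed.

Lemma le_step_sum_pos lam mu f s : sub_measure lam mu -> lower_step f s ->
  step_sum lam (pos_step s) <= step_sum mu (pos_step s).
Proof.
move=> lammu [scell _]; rewrite /step_sum !big_map (big_nth (set0, 0)).
rewrite [in leRHS](big_nth (set0, 0)) !big_mkord; apply: ler_sum => i _.
by rewrite ler_wpM2l ?le_max ?lexx ?orbT // (lammu _ (scell _ (ltn_ord i)).1).2.
Qed.

Lemma lower_sums_cst mu f c : (forall x, c <= f x) ->
  lower_sums mu f (c * mu setT).
Proof.
move=> cf; apply/lower_sumsP; exists [:: (setT, c)]; first exact: lower_step_cst.
by rewrite /step_sum big_seq1.
Qed.

Lemma lower_sums_has_sup mu f : pos_fa_measure mu ->
  (forall x, 0 <= f x <= 1) -> has_sup (lower_sums mu f).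
Proof.
move=> mupos f01; split.
  by exists (0 * mu setT); apply: lower_sums_cst => x; case/andP: (f01 x).
exists (mu setT) => _ /lower_sumsP[s sf ->].
by apply: step_sum_le_setT sf => // x; case/andP: (f01 x).
Qed.

Lemma lower_sums_le_fa_integral mu f r : pos_fa_measure mu ->
  (forall x, 0 <= f x <= 1) -> lower_sums mu f r -> r <= fa_integral mu f.
Proof.
move=> mupos f01; apply: (ubP _ _).1.
exact: sup_upper_bound (lower_sums_has_sup mupos f01).
Qed.

Lemma le_fa_integral lam mu f : pos_fa_measure mu ->
  (forall x, 0 <= f x <= 1) -> sub_measure lam mu ->
  fa_integral lam f <= fa_integral mu f.
Proof.
move=> mupos f01 lammu; have f0 x : 0 <= f x by case/andP: (f01 x).
apply: ge_sup; first by exists (0 * lam setT); exact: lower_sums_cst.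
move=> _ /lower_sumsP[s sf ->].
have lam0 : nonneg_on_sigma lam by move=> E /lammu[].
apply: le_trans (step_sum_le_pos lam0 sf) _.
apply: le_trans (le_step_sum_pos lammu sf) _.
apply: lower_sums_le_fa_integral => //; apply/lower_sumsP.
by exists (pos_step s); first exact: lower_step_pos.
Qed.

End fa_integral.

Section integral_of_count_additive.
Context (d : measure_display) (X : measurableType d) (R : realType).
Variable lam : set X -> R.
Hypotheses (lam0 : nonneg_on_sigma lam) (lamca : count_additive lam).
Local Notation cell s i := (nth (set0, 0) s i).

(* Clipped at 0 because a measure must be nonnegative on every set,
   measurable or not. *)
Definition ca_measure (E : set X) : \bar R := (Num.max (lam E) 0)%:E.

Lemma ca_measureE E : measurable E -> ca_measure E = (lam E)%:E.
Proof. by move=> mE; rewrite /ca_measure max_l // lam0. Qed.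

Let ca_measure0 : ca_measure set0 = 0%E.
Proof. by rewrite ca_measureE // count_additive_set0. Qed.

Let ca_measure_ge0 E : (0 <= ca_measure E)%E.
Proof. by rewrite lee_fin le_max lexx orbT. Qed.

Let ca_measure_sigma_additive : semi_sigma_additive ca_measure.
Proof.
move=> F mF tF mUF; rewrite ca_measureE //.
have -> : (fun n => \sum_(0 <= k < n) ca_measure (F k)) =
    (fun n => (\sum_(k < n) lam (F k))%:E).
  apply/funext => n; rewrite big_mkord -sumEFin.
  by apply: eq_bigr => k _; exact: ca_measureE.
by apply: cvg_EFin; [exact: nearW|exact: lamca].
Qed.

HB.instance Definition _ := isMeasure.Build _ _ _ ca_measure
  ca_measure0 ca_measure_ge0 ca_measure_sigma_additive.

Local Open Scope ereal_scope.
Import HBNNSimple.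

Lemma integral_le_fa_integral (f : X -> R) : (forall x, (0 <= f x <= 1)%R) ->
  \int[ca_measure]_x (f x)%:E <= (fa_integral lam f)%:E.
Proof.
move=> f01; rewrite ge0_integralTE => [|x]; last first.
  by rewrite lee_fin; case/andP: (f01 x).
apply: ge_ereal_sup => _ [h /= hf <-].
rewrite sintegralE fsbig_finite /=; last exact: fimfunP.
set l := finmap.enum_fset _; have l_uniq : uniq l by exact: finmap.fset_uniq.
have mh r : measurable (h @^-1` [set r]) by exact: measurable_funPTI.
rewrite (eq_bigr (fun r => (r * lam (h @^-1` [set r]))%:E)); last first.
  by move=> r _; rewrite ca_measureE.
rewrite sumEFin lee_fin; apply: lower_sums_le_fa_integral => //.
  exact: count_additive_pos_fa_measure.
apply/lower_sumsP; exists [seq (h @^-1` [set r], r) | r <- l]; last first.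
  by rewrite /step_sum big_map.
split; last split; rewrite ?size_map.
- move=> i li; rewrite (nth_map 0%R) //=; split => // x <-.
  by have := hf x; rewrite lee_fin.
- move=> i j li lj ij; rewrite !(nth_map 0%R) //=.
  apply/seteqP; split => // x [/= hi hj].
  by move: ij; rewrite -(nth_uniq 0%R li lj l_uniq) -hi -hj eqxx.
- move=> x; have hx : h x \in l.
    by rewrite /l in_fset_set ?inE; [exists x|exact: fimfunP].
  exists (index (h x) l); rewrite ?index_mem //.
  by rewrite (nth_map 0%R) ?index_mem //= nth_index.
Qed.

Lemma step_sum_le_integral (f : X -> R) s : measurable_fun setT f ->
  lower_step f s -> (forall i, (i < size s)%N -> 0 <= (cell s i).2)%R ->
  (step_sum lam s)%:E <= \int[ca_measure]_x (f x)%:E.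
Proof.
move=> mf [scell [sdisj scover]] s0.
pose c (i : 'I_(size s)) := (cell s i).2.
pose A (i : 'I_(size s)) := (cell s i).1.
have mA i : measurable (A i) by exact: (scell i (ltn_ord i)).1.
have c0 i : (0 <= c i)%R by exact: s0.
have mstep i : measurable_fun setT (fun x => (c i * \1_(A i) x)%:E).
  by apply/measurable_EFinP/measurable_funM => //; exact: measurable_indic.
have step_le x : (\sum_i c i * \1_(A i) x <= f x)%R.
  have [i0 si0 i0x] := scover x.
  rewrite (bigD1 (Ordinal si0)) //= big1 ?addr0 => [|j j_i0].
    by rewrite indicE mem_set // mulr1 (scell _ si0).2.
  rewrite indicE memNset ?mulr0 // => jx.
  have := sdisj j i0 (ltn_ord j) si0 j_i0.
  by rewrite -subset0 => /(_ x (conj jx i0x)).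
have integral_cell i :
    \int[ca_measure]_x (c i * \1_(A i) x)%:E = (c i * lam (A i))%:E.
  rewrite (@integralZl_indic _ _ _ _ _ measurableT (fun=> A i)) //; last first.
    by move=> /lt_le_trans/(_ (c0 i)); rewrite ltxx.
  by rewrite integral_indic // setIT EFinM -(ca_measureE (mA i)).
rewrite /step_sum (big_nth (set0, 0%R)) big_mkord -sumEFin.
rewrite (eq_bigr _ (fun i _ => esym (integral_cell i))).
rewrite -ge0_integral_sum // => [|i x _]; last by rewrite lee_fin mulr_ge0.
apply: ge0_le_integral => //.
- by move=> x _; rewrite sumEFin lee_fin sumr_ge0 // => i _; rewrite mulr_ge0.
- exact: emeasurable_sum.
- exact/measurable_EFinP.
- by move=> x _; rewrite sumEFin lee_fin step_le.
Qed.

Lemma lower_sums_le_integral (f : X -> R) r : measurable_fun setT f ->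
  (forall x, (0 <= f x)%R) -> lower_sums lam f r ->
  r%:E <= \int[ca_measure]_x (f x)%:E.
Proof.
move=> mf f0 /lower_sumsP[s sf ->].
apply: le_trans (step_sum_le_integral mf (lower_step_pos f0 sf) _).
  by rewrite lee_fin; exact: step_sum_le_pos sf.
by rewrite size_map => i si; rewrite (nth_map (set0, 0%R)) //= le_max lexx orbT.
Qed.

Lemma integral_fa_integral (f : X -> R) : measurable_fun setT f ->
  (forall x, (0 <= f x <= 1)%R) ->
  \int[ca_measure]_x (f x)%:E = (fa_integral lam f)%:E.
Proof.
move=> mf f01; have f0 x : (0 <= f x)%R by case/andP: (f01 x).
have le_fa := integral_le_fa_integral f01.
have int_fin : \int[ca_measure]_x (f x)%:E \is a fin_num.
  rewrite ge0_fin_numE ?(le_lt_trans le_fa) ?ltry //.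
  by apply: integral_ge0 => x _; rewrite lee_fin.
apply/eqP; rewrite eq_le le_fa /= -(fineK int_fin) lee_fin.
apply: ge_sup; first by exists (0 * lam setT)%R; exact: lower_sums_cst.
by move=> r /(lower_sums_le_integral mf f0); rewrite -lee_fin fineK.
Qed.

Lemma count_additive_markov_op (p : X -> set X -> R) : transition_function p ->
  count_additive (markov_op p lam).
Proof.
move=> [p01 [_ [pm pca]]] F mF tF.
have mU : measurable (\bigcup_n F n) by exact: bigcupT_measurable.
have markovE E : measurable E ->
    (markov_op p lam E)%:E = \int[ca_measure]_x (p x E)%:E.
  by move=> mE; rewrite integral_fa_integral // => [|x]; [exact: pm|exact: p01].
have pF0 k x : 0 <= (p x (F k))%:E.
  by rewrite lee_fin; case/andP: (p01 x _ (mF k)).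
have series_p x : \sum_(n <oo) (p x (F n))%:E = (p x (\bigcup_n F n))%:E.
  apply: cvg_lim => //; under eq_fun do rewrite big_mkord sumEFin.
  by apply: cvg_EFin; [exact: nearW|exact: pca].
suff : (\sum_(k < n) markov_op p lam (F k))%:E @[n --> \oo] -->
    (markov_op p lam (\bigcup_n F n))%:E by exact: fine_cvg.
rewrite markovE // (_ : (fun x => _) = fun x => \sum_(n <oo) (p x (F n))%:E);
  last by apply/funext => x; rewrite series_p.
rewrite integral_nneseries // => [|k]; last exact/measurable_EFinP/pm.
rewrite (_ : (fun n => _) =
    fun n => \sum_(0 <= k < n) \int[ca_measure]_x (p x (F k))%:E).
  by apply: is_cvg_nneseries => k _ _; exact: integral_ge0.
apply/funext => n; rewrite -sumEFin big_mkord.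
by apply: eq_bigr => k _; exact: markovE.
Qed.

End integral_of_count_additive.

Section markov_cycle.
Context (d : measure_display) (X : measurableType d) (R : realType).
Variable p : X -> set X -> R.
Hypothesis p_trans : transition_function p.
Implicit Types (mu lam : set X -> R).

Lemma sub_measure_markov_op lam mu : count_additive lam -> pos_fa_measure mu ->
  sub_measure lam mu -> sub_measure (markov_op p lam) (markov_op p mu).
Proof.
move=> lamca mupos lammu E mE; have [p01 _] := p_trans.
have pE01 x : 0 <= p x E <= 1 by exact: p01.
have lampos : pos_fa_measure lam.
  by apply: count_additive_pos_fa_measure => // F /lammu[].
split; last exact: le_fa_integral.
rewrite -(mul0r (lam setT)); apply: lower_sums_le_fa_integral => //.
by apply: lower_sums_cst => x; case/andP: (pE01 x).
Qed.

Lemma markov_op_setT lam : pos_fa_measure lam -> markov_op p lam setT = lam setT.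
Proof.
move=> lampos; have [p01 [p1 _]] := p_trans.
have p01T x : 0 <= p x setT <= 1 by rewrite p1 ler01 lexx.
apply/eqP; rewrite eq_le; apply/andP; split.
  apply: ge_sup.
    by exists (1 * lam setT); apply: lower_sums_cst => x; rewrite p1.
  move=> _ /lower_sumsP[s sf ->]; apply: step_sum_le_setT sf => // x.
  by case/andP: (p01T x).
rewrite -[leLHS]mul1r; apply: lower_sums_le_fa_integral => //.
by apply: lower_sums_cst => x; rewrite p1.
Qed.

Lemma iter_markov_op_cycle m (mu : nat -> set X -> R) lam j k :
  measure_cycle p m mu -> (j < m)%N ->
  count_additive lam -> sub_measure lam (mu j) ->
  [/\ count_additive (iter k (markov_op p) lam),
      sub_measure (iter k (markov_op p) lam) (mu ((j + k) %% m)%N) &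
      iter k (markov_op p) lam setT = lam setT].
Proof.
move=> [m0 [mupos [_ cycle]]] jm lamca lammu.
elim: k => [|k [ca sub mass]]; first by rewrite addn0 modn_small.
have jkm : ((j + k) %% m < m)%N by rewrite ltn_pmod.
have lampos : pos_fa_measure (iter k (markov_op p) lam).
  by apply: count_additive_pos_fa_measure => // F /sub[].
split => /=.
- exact: (count_additive_markov_op lampos.1 ca p_trans).
- move=> E mE; rewrite addnS -addn1 -modnDml addn1 -cycle //.
  exact: sub_measure_markov_op ca (mupos _ jkm) sub E mE.
- by rewrite markov_op_setT.
Qed.

Lemma measure_cycle_purely_fin_additive m (mu : nat -> set X -> R) i j :
  measure_cycle p m mu -> (i < m)%N -> (j < m)%N ->
  purely_fin_additive (mu i) -> purely_fin_additive (mu j).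
Proof.
move=> cyc im jm [_ pure_i]; have [_ [mupos _]] := cyc.
split=> [|lam lamca lammu]; first exact: mupos.
have ji : ((j + (i + m - j)) %% m)%N = i.
  by rewrite addnBA ?addKn ?modnDr ?modn_small // (leq_trans (ltnW jm)) ?leq_addl.
have [ca sub mass] := iter_markov_op_cycle (i + m - j) cyc jm lamca lammu.
rewrite ji in sub; apply: pos_fa_measure_eq0.
  by apply: count_additive_pos_fa_measure => // F /lammu[].
by rewrite -mass (pure_i _ ca sub _ measurableT).
Qed.

End markov_cycle.

Section measure_meet.
Context (d : measure_display) (X : measurableType d) (R : realType).
Variables lam mu : set X -> R.
Hypotheses (lampos : pos_fa_measure lam) (mupos : pos_fa_measure mu).

Definition meet_values (E : set X) : set R :=
  [set r | exists F, [/\ measurable F, F `<=` E & r = lam F + mu (E `\` F)]].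

Definition measure_meet (E : set X) : R := inf (meet_values E).

Let meet_values_set0 E : meet_values E (lam set0 + mu E).
Proof. by exists set0; rewrite setD0; split. Qed.

Lemma meet_values_has_inf E : measurable E -> has_inf (meet_values E).
Proof.
move=> mE; split; first by exists (lam set0 + mu E).
exists 0 => _ [F [mF _ ->]]; apply: addr_ge0; first exact: lampos.1.
exact/mupos.1/measurableD.
Qed.

Lemma measure_meet_le E F : measurable E -> measurable F -> F `<=` E ->
  measure_meet E <= lam F + mu (E `\` F).
Proof.
move=> mE mF FE; have [_ /ge_inf lb] := meet_values_has_inf mE.
by apply: lb; exists F.
Qed.

Lemma measure_meet_ge0 E : measurable E -> 0 <= measure_meet E.
Proof.
move=> mE; apply: lb_le_inf; first by exists (lam set0 + mu E).
move=> _ [F [mF _ ->]]; apply: addr_ge0; first exact: lampos.1.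
exact/mupos.1/measurableD.
Qed.

Lemma measure_meet_lel E : measurable E -> measure_meet E <= lam E.
Proof.
move=> mE; have := measure_meet_le mE mE (@subset_refl _ E).
by rewrite setDv mupos.2.1 addr0.
Qed.

Lemma measure_meet_ler E : measurable E -> measure_meet E <= mu E.
Proof.
move=> mE; have := measure_meet_le mE measurable0 (@sub0set _ E).
by rewrite lampos.2.1 setD0 add0r.
Qed.

Let meet_split A B F : measurable A -> measurable B -> A `&` B = set0 ->
  measurable F -> F `<=` A `|` B ->
  lam F + mu ((A `|` B) `\` F) =
  (lam (F `&` A) + mu (A `\` (F `&` A))) +
  (lam (F `&` B) + mu (B `\` (F `&` B))).
Proof.
move=> mA mB AB0 mF FAB.
have disj (G H : set X) : G `<=` A -> H `<=` B -> G `&` H = set0.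
  by move=> GA HB; apply/seteqP; split => // x [/GA xA /HB xB]; rewrite -AB0.
have mFA := measurableI _ _ mF mA; have mFB := measurableI _ _ mF mB.
have {1}-> : F = (F `&` A) `|` (F `&` B) by rewrite -setIUr setIidl.
have -> : (A `|` B) `\` F = (A `\` (F `&` A)) `|` (B `\` (F `&` B)).
  apply/seteqP; split => x.
    by move=> [[xA|xB] Fx]; [left|right]; split => // -[].
  by case=> -[xAB xF]; (split; [by [left|right]|move=> Fx; apply: xF]).
have FAA : F `&` A `<=` A by exact: subIsetr.
have FBB : F `&` B `<=` B by exact: subIsetr.
rewrite (lampos.2.2 _ _ mFA mFB (disj _ _ FAA FBB)).
rewrite (mupos.2.2 _ _ (measurableD mA mFA) (measurableD mB mFB)).
  by rewrite addrACA.
by apply: disj => x [].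
Qed.

Lemma measure_meet_fin_additive : fin_additive measure_meet.
Proof.
split=> [|A B mA mB AB0].
  apply/eqP; rewrite eq_le measure_meet_ge0 // andbT.
  by have := measure_meet_ler measurable0; rewrite mupos.2.1.
have mAB := measurableU _ _ mA mB.
apply/eqP; rewrite eq_le; apply/andP; split; last first.
  apply: lb_le_inf.
    by exists (lam set0 + mu (A `|` B)); exact: meet_values_set0.
  move=> _ [F [mF FAB ->]]; rewrite meet_split //.
  by apply: lerD; apply: measure_meet_le; rewrite ?subIsetr //;
    exact: measurableI.
apply/ler_addgt0Pr => e e0; have e20 : 0 < e / 2 by rewrite divr_gt0.
have [_ [FA [mFA FAA ->]] ltA] := inf_adherent e20 (meet_values_has_inf mA).
have [_ [FB [mFB FBB ->]] ltB] := inf_adherent e20 (meet_values_has_inf mB).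
have FAB : FA `|` FB `<=` A `|` B by move=> x [/FAA|/FBB]; [left|right].
have mFAB := measurableU _ _ mFA mFB.
apply: le_trans (measure_meet_le mAB mFAB FAB) _.
have FA_A : (FA `|` FB) `&` A = FA.
  rewrite setIUl (setIidl FAA) -[RHS]setU0; congr (_ `|` _).
  by apply/seteqP; split => // x [/FBB xB xA]; rewrite -AB0.
have FB_B : (FA `|` FB) `&` B = FB.
  rewrite setIUl (setIidl FBB) -[RHS]set0U; congr (_ `|` _).
  by apply/seteqP; split => // x [/FAA xA xB]; rewrite -AB0.
rewrite meet_split // FA_A FB_B [e]splitr [leRHS]addrACA.
by apply: lerD; apply: ltW.
Qed.

End measure_meet.

Section purely_finitely_additive.
Context (d : measure_display) (X : measurableType d) (R : realType).
Implicit Types (mu lam : set X -> R).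

Lemma purely_fin_additive_split mu lam E e : purely_fin_additive mu ->
  nonneg_on_sigma lam -> count_additive lam -> measurable E -> 0 < e ->
  exists F, [/\ measurable F, F `<=` E, lam F < e & mu (E `\` F) < e].
Proof.
move=> [mupos pure] lam0 lamca mE e0.
have lampos := count_additive_pos_fa_measure lam0 lamca.
have meet_ca : count_additive (measure_meet lam mu).
  apply: count_additive_dominated lamca; first exact: measure_meet_fin_additive.
  by move=> A mA; rewrite measure_meet_ge0 ?measure_meet_lel.
have meet0 : measure_meet lam mu E = 0.
  apply: pure meet_ca _ _ mE => A mA.
  by split; [exact: measure_meet_ge0|exact: measure_meet_ler].
have [_ [F [mF FE ->]]] :=
  inf_adherent e0 (meet_values_has_inf lampos mupos mE).
rewrite -/(measure_meet lam mu E) meet0 add0r => lt_e.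
have lamF0 := lam0 _ mF; have muEF0 := mupos.1 _ (measurableD mE mF).
by exists F; split => //; apply: le_lt_trans lt_e; rewrite ?lerDl ?lerDr.
Qed.

Lemma purely_fin_additiveD mu1 mu2 :
  purely_fin_additive mu1 -> purely_fin_additive mu2 ->
  purely_fin_additive (fun E => mu1 E + mu2 E).
Proof.
move=> pure1 pure2.
have [[mu1_0 mu1fa] _] := pure1; have [[mu2_0 mu2fa] _] := pure2.
split.
  split; first by move=> E mE; apply: addr_ge0; [exact: mu1_0|exact: mu2_0].
  split; first by rewrite mu1fa.1 mu2fa.1 addr0.
  by move=> A B mA mB AB; rewrite mu1fa.2 // mu2fa.2 // addrACA.
move=> lam lamca lammu.
have lam0 : nonneg_on_sigma lam by move=> E /lammu[].
have lampos := count_additive_pos_fa_measure lam0 lamca.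
apply: pos_fa_measure_eq0 => //; apply/ler_addgt0Pr => e e0; rewrite add0r.
have e4 : 0 < e / 4 by rewrite divr_gt0.
have [F1 [mF1 _ lamF1 mu1F1]] :=
  purely_fin_additive_split pure1 lam0 lamca measurableT e4.
have mG1 := measurableD measurableT mF1.
have [F2 [mF2 F2G1 lamF2 mu2F2]] :=
  purely_fin_additive_split pure2 lam0 lamca mG1 e4.
have mG := measurableD mG1 mF2.
have splitT := fin_additive_setD lampos.2 mF1 measurableT (@subsetT _ F1).
have splitG1 := fin_additive_setD lampos.2 mF2 mG1 F2G1.
have lamG := (lammu _ mG).2.
have mu1G : mu1 ((setT `\` F1) `\` F2) <= mu1 (setT `\` F1).
  by apply: le_pos_fa_measure pure1.1 mG mG1 _ => x [].
have e_split : e = e / 4 + e / 4 + e / 4 + e / 4 by field.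
have lamG0 := lam0 _ mG.
(* lam setT = lam F1 + lam F2 + lam G with lam G <= mu1 G + mu2 G. *)
lra.
Qed.

Lemma purely_fin_additive0 : purely_fin_additive (fun _ : set X => 0 : R).
Proof.
split; first by split => //; split => // A B _ _ _; rewrite addr0.
move=> lam _ lam0 E /lam0[lamE0 lamE_le0].
by apply/eqP; rewrite eq_le lamE0 lamE_le0.
Qed.

Lemma purely_fin_additive_sum (mu : nat -> set X -> R) n :
  (forall i, (i < n)%N -> purely_fin_additive (mu i)) ->
  purely_fin_additive (fun E => \sum_(k < n) mu k E).
Proof.
elim: n => [|n IH] pure.
  by under eq_fun do rewrite big_ord0; exact: purely_fin_additive0.
under eq_fun do rewrite big_ord_recr /=.
apply: purely_fin_additiveD; last exact: pure.
by apply: IH => i ilt; apply: pure; rewrite ltnS ltnW.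
Qed.

Lemma purely_fin_additiveZ mu c : 0 < c ->
  purely_fin_additive mu -> purely_fin_additive (fun E => c * mu E).
Proof.
move=> c0 [[mu0 [mu_set0 muU]] pure]; split.
  split; first by move=> E mE; apply: mulr_ge0; [exact: ltW|exact: mu0].
  by split=> [|A B mA mB AB]; rewrite ?mu_set0 ?mulr0 ?muU ?mulrDr.
move=> lam lamca lammu E mE.
have clamca : count_additive (fun E => c^-1 * lam E).
  move=> F mF tF; under eq_fun do rewrite -mulr_sumr.
  exact: cvgMr (lamca F mF tF).
suff : c^-1 * lam E = 0.
  by move/eqP; rewrite mulf_eq0 invr_eq0 gt_eqF //= => /eqP.
apply: (pure _ clamca) => // A mA; have [lamA0 lamA_le] := lammu A mA.
split; first by rewrite mulr_ge0 // invr_ge0 ltW.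
by rewrite ler_pdivrMl.
Qed.

End purely_finitely_additive.

Theorem theorem4p3 (d : measure_display) (X : measurableType d) (R : realType)
  (Hinf : ~ finite_set [set: X])
  (Hsing : forall x : X, measurable [set x])
  (p : X -> set X -> R) (Hp : transition_function p)
  (m : nat) (mu : nat -> set X -> R) (Hcyc : measure_cycle p m mu)
  (Hone : exists2 i, (i < m)%N & purely_fin_additive (mu i)) :
  (forall i, (i < m)%N -> purely_fin_additive (mu i)) /\
  purely_fin_additive (mean_measure m mu).
Proof.
have [i im pure_i] := Hone.
have pure_all j (jm : (j < m)%N) : purely_fin_additive (mu j) :=
  measure_cycle_purely_fin_additive Hp Hcyc im jm pure_i.
split=> //; apply: purely_fin_additiveZ; last exact: purely_fin_additive_sum.
by rewrite invr_gt0 ltr0n; case: Hcyc.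
Qed.
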